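(* Let $H$ be a separable complex Hilbert space, $(\Omega,\mu)$ a measure space with positive measure, and let $K\in B(H)$ have closed range. If $F:\Omega\to H$ is a Parseval continuous $K$-frame of $H$, then $K^{\dagger}F$ (i.e. $\omega\mapsto K^{\dagger}F(\omega)$) is a dual continuous $K$-Bessel sequence of $F$.
   Context: A map $F:\Omega\to H$ is weakly measurable if $\omega\mapsto\langle f,F(\omega)\rangle$ is measurable for every $f\in H$. A continuous Bessel sequence is a weakly measurable $G:\Omega\to H$ with $\int_\Omega|\langle f,G(\omega)\rangle|^2\,d\mu(\omega)\le B\|f\|^2$ for all $f\in H$, for some $B>0$. A Parseval continuous $K$-frame is a weakly measurable $F$ with $\int_\Omega|\langle f,F(\omega)\rangle|^2\,d\mu(\omega)=\|K^{\ast}f\|^2$ for all $f\in H$. A dual continuous $K$-Bessel sequence of $F$ is a continuous Bessel sequence $G$ such that $Kf=\int_\Omega\langle f,G(\omega)\rangle F(\omega)\,d\mu(\omega)$ for all $f\in H$ (weak integral). For $K$ with closed range, $K^{\dagger}\in B(H)$ denotes its Moore–Penrose pseudo-inverse, the unique operator with $KK^\dagger K=K$, $K^\dagger KK^\dagger=K^\dagger$, and $KK^\dagger$, $K^\dagger K$ self-adjoint. *)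

From HB Require Import structures.
From mathcomp Require Import all_boot all_order all_algebra.
From mathcomp Require Import all_classical all_reals all_analysis.
From mathcomp Require Import complex.
Set Implicit Arguments. Unset Strict Implicit. Unset Printing Implicit Defensive.
Import Order.TTheory GRing.Theory Num.Theory.
Local Open Scope ring_scope.

(* A complex inner product space: V is a vector space over C := R[i],
   ip is linear in the FIRST argument and conjugate-linear in the second. *)
Section Hilbert.
Variable R : realType.
Local Notation C := (R[i]).
Variable V : lmodType C.
Variable ip : V -> V -> C.

Record is_inner_product : Prop := {
  ip_linl : forall (a : C) (u v w : V), ip (a *: u + v) w = a * ip u w + ip v w;
  ip_conj : forall u v : V, ip v u = conjc (ip u v);
  ip_pos  : forall u : V, complex.Im (ip u u) = 0 /\ 0 <= complex.Re (ip u u);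
  ip_def  : forall u : V, ip u u = 0 -> u = 0 }.

Definition hnorm (u : V) : R := Num.sqrt (complex.Re (ip u u)).

Definition cvgH (u : nat -> V) (g : V) : Prop :=
  forall eps : R, 0 < eps -> exists N : nat, forall n, (N <= n)%N -> hnorm (u n - g) < eps.

Definition cauchyH (u : nat -> V) : Prop :=
  forall eps : R, 0 < eps -> exists N : nat,
    forall m n, (N <= m)%N -> (N <= n)%N -> hnorm (u m - u n) < eps.

Definition completeH : Prop := forall u, cauchyH u -> exists g, cvgH u g.

Definition separableH : Prop :=
  exists s : nat -> V, forall (g : V) (eps : R), 0 < eps -> exists n, hnorm (s n - g) < eps.

Record separable_hilbert : Prop := {
  sh_inner : is_inner_product;
  sh_complete : completeH;
  sh_separable : separableH }.

Definition bounded_op (K : V -> V) : Prop :=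
  (forall (a : C) (u v : V), K (a *: u + v) = a *: K u + K v) /\
  exists M : R, forall f, hnorm (K f) <= M * hnorm f.

Definition is_adjoint (K Ks : V -> V) : Prop :=
  forall f g, ip (K f) g = ip f (Ks g).

Definition self_adjoint (T : V -> V) : Prop := is_adjoint T T.

Definition closed_range (K : V -> V) : Prop :=
  forall (u : nat -> V) (g : V), (forall n, exists h, u n = K h) -> cvgH u g ->
    exists h, g = K h.

Definition is_pseudo_inverse (K Kd : V -> V) : Prop :=
  [/\ bounded_op Kd,
      (forall f, K (Kd (K f)) = K f),
      (forall f, Kd (K (Kd f)) = Kd f),
      self_adjoint (fun f => K (Kd f)) &
      self_adjoint (fun f => Kd (K f))].

Variables (d : measure_display) (T : measurableType d).
Variable mu : {measure set T -> \bar R}.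

Definition Cmeasurable (h : T -> C) : Prop :=
  measurable_fun setT (fun w => complex.Re (h w)) /\ measurable_fun setT (fun w => complex.Im (h w)).

Definition Cintegrable (h : T -> C) : Prop :=
  mu.-integrable setT (fun w => (complex.Re (h w))%:E) /\
  mu.-integrable setT (fun w => (complex.Im (h w))%:E).

Definition Cintegral (h : T -> C) : C :=
  Complex (Rintegral mu setT (fun w => complex.Re (h w)))
          (Rintegral mu setT (fun w => complex.Im (h w))).

Definition weakly_measurable (F : T -> V) : Prop :=
  forall f : V, Cmeasurable (fun w => ip f (F w)).

Definition cont_Bessel (G : T -> V) : Prop :=
  weakly_measurable G /\
  exists B : R, 0 < B /\ forall f : V,
    (\int[mu]_w ((ComplexField.Normc.normc (ip f (G w))) ^+ 2)%:E <= (B * hnorm f ^+ 2)%:E)%E.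

(* Parseval continuous K-frame; Ks stands for K^* *)
Definition parseval_cont_Kframe (Ks : V -> V) (F : T -> V) : Prop :=
  weakly_measurable F /\
  forall f : V, (\int[mu]_w ((ComplexField.Normc.normc (ip f (F w))) ^+ 2)%:E = (hnorm (Ks f) ^+ 2)%:E)%E.

(* G is a dual continuous K-Bessel sequence of F:
   K f = \int <f, G w> F w dmu  as a weak integral, i.e. for every g,
   w |-> <f,G w><F w,g> is integrable and <K f, g> = \int <f,G w><F w, g> dmu *)
Definition dual_cont_KBessel (K : V -> V) (F G : T -> V) : Prop :=
  cont_Bessel G /\
  forall f g : V,
    Cintegrable (fun w => ip f (G w) * ip (F w) g) /\
    ip (K f) g = Cintegral (fun w => ip f (G w) * ip (F w) g).

End Hilbert.

From HB Require Import structures.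
From mathcomp Require Import all_boot all_order all_algebra.
From mathcomp Require Import all_classical all_reals all_analysis.
From mathcomp Require Import complex.
From mathcomp Require Import ring lra measurable_realfun.
Set Implicit Arguments. Unset Strict Implicit. Unset Printing Implicit Defensive.
Import Order.TTheory GRing.Theory Num.Theory.
Local Open Scope ring_scope.
Local Open Scope complex_scope.

(* The only analytic input is the adjoint (K^†)^* of K^†, which exists by the
   Riesz representation theorem; Riesz is obtained from completeness through
   the nearest point of the kernel of a bounded functional (parallelogram law).
   Then <f, K^† F w> = <(K^†)^* f, F w>, and polarizing the Parseval identity
   gives  int <u, F w><F w, v> dmu = <K^* u, K^* v>.  Since
   K^* (K^†)^* = (K^† K)^* = K^† K, the weak integral of <f, K^† F w> F w
   tested against g is <K^† K f, K^* g> = <K K^† K f, g> = <K f, g>, and the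
   Bessel bound is ||K^† K f||^2 <= ||K^†||^2 ||K||^2 ||f||^2. *)

Local Notation normc := ComplexField.Normc.normc.

Section ComplexModulus.
Variable R : realType.
Implicit Types a b c : R[i].

Lemma normc_sqrE c : normc c ^+ 2 = complex.Re c ^+ 2 + complex.Im c ^+ 2.
Proof. by case: c => x y; rewrite /= sqr_sqrtr // addr_ge0 // sqr_ge0. Qed.

Lemma normc_ge0 c : 0 <= normc c.
Proof. by case: c => x y; exact: sqrtr_ge0. Qed.

Lemma Re_mulJ_polar a b :
  complex.Re (a * conjc b) = 4^-1 * (normc (a + b) ^+ 2 - normc (a - b) ^+ 2).
Proof. by case: a => x y; case: b => u v; rewrite !normc_sqrE /=; field. Qed.

Lemma Im_mulJ_polar a b :
  complex.Im (a * conjc b) =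
  4^-1 * (normc (a + 'i * b) ^+ 2 - normc (a - 'i * b) ^+ 2).
Proof. by case: a => x y; case: b => u v; rewrite !normc_sqrE /=; field. Qed.

Lemma Re_le_normc c : complex.Re c <= normc c.
Proof.
case: c => x y; apply: le_trans (ler_norm x) _.
by rewrite /= -sqrtr_sqr ler_wsqrtr // lerDl sqr_ge0.
Qed.

End ComplexModulus.

Section InnerProduct.
Variables (R : realType) (V : lmodType R[i]) (ip : V -> V -> R[i]).
Hypothesis ipP : is_inner_product ip.
Implicit Types (a : R[i]) (u v w : V).

Lemma ipDl u v w : ip (u + v) w = ip u w + ip v w.
Proof. by have := ip_linl ipP 1 u v w; rewrite scale1r mul1r. Qed.

Lemma ip0l w : ip 0 w = 0.
Proof. by apply: (addrI (ip 0 w)); rewrite -ipDl !addr0. Qed.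

Lemma ipZl a u w : ip (a *: u) w = a * ip u w.
Proof. by have := ip_linl ipP a u 0 w; rewrite !addr0 ip0l addr0. Qed.

Lemma ipBl u v w : ip (u - v) w = ip u w - ip v w.
Proof. by rewrite ipDl -scaleN1r ipZl mulN1r. Qed.

Lemma ipDr u v w : ip w (u + v) = ip w u + ip w v.
Proof. by rewrite (ip_conj ipP) ipDl rmorphD /= -!(ip_conj ipP). Qed.

Lemma ipZr a u w : ip w (a *: u) = conjc a * ip w u.
Proof. by rewrite (ip_conj ipP) ipZl rmorphM /= -(ip_conj ipP). Qed.

Lemma ip0r w : ip w 0 = 0.
Proof. by rewrite (ip_conj ipP) ip0l rmorph0. Qed.

Lemma ipBr u v w : ip w (u - v) = ip w u - ip w v.
Proof. by rewrite (ip_conj ipP) ipBl rmorphB /= -!(ip_conj ipP). Qed.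

Lemma hnorm_ge0 u : 0 <= hnorm ip u.
Proof. exact: sqrtr_ge0. Qed.

Lemma ip_self u : ip u u = (hnorm ip u ^+ 2)%:C.
Proof.
have [Im0 Re_ge0] := ip_pos ipP u.
by rewrite sqr_sqrtr //; case: (ip u u) Im0 => x y /= ->.
Qed.

Lemma hnorm_eq0 u : hnorm ip u = 0 -> u = 0.
Proof. by move=> u0; apply: (ip_def ipP); rewrite ip_self u0 expr0n. Qed.

Lemma ipr_ext u v : (forall w, ip w u = ip w v) -> u = v.
Proof.
by move=> uv; apply/eqP; rewrite -subr_eq0; apply/eqP/(ip_def ipP); rewrite ipBr uv subrr.
Qed.

Lemma hnorm_expand u v a :
  hnorm ip (u + a *: v) ^+ 2 =
  hnorm ip u ^+ 2 + 2 * complex.Re (conjc a * ip u v) + normc a ^+ 2 * hnorm ip v ^+ 2.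
Proof.
have := ip_self (u + a *: v).
rewrite ipDl !ipDr !ipZl !ipZr !ip_self (ip_conj ipP u v) normc_sqrE.
case: (ip u v) => x y; case: a => s t /(congr1 (@complex.Re _)) /= <-; ring.
Qed.

Lemma hnormD_sqr u v :
  hnorm ip (u + v) ^+ 2 = hnorm ip u ^+ 2 + 2 * complex.Re (ip u v) + hnorm ip v ^+ 2.
Proof.
have := hnorm_expand u v 1; rewrite scale1r => ->.
by rewrite rmorph1 mul1r normc_sqrE /=; ring.
Qed.

Lemma hnormB_sqr u v :
  hnorm ip (u - v) ^+ 2 = hnorm ip u ^+ 2 - 2 * complex.Re (ip u v) + hnorm ip v ^+ 2.
Proof.
have := hnorm_expand u v (-1); rewrite scaleN1r => ->.
by rewrite rmorphN rmorph1 mulN1r raddfN normc_sqrE /=; ring.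
Qed.

Lemma Re_ip_polar u v :
  complex.Re (ip u v) = 4^-1 * (hnorm ip (u + v) ^+ 2 - hnorm ip (u - v) ^+ 2).
Proof. by rewrite hnormD_sqr hnormB_sqr; field. Qed.

Lemma Im_ip_polar u v :
  complex.Im (ip u v) =
  4^-1 * (hnorm ip (u + 'i *: v) ^+ 2 - hnorm ip (u - 'i *: v) ^+ 2).
Proof.
rewrite -(scaleNr 'i v) !hnorm_expand !normc_sqrE.
by case: (ip u v) => x y /=; field.
Qed.

Lemma hnorm_sub_proj u v : hnorm ip v != 0 ->
  hnorm ip (u - ((hnorm ip v ^+ 2)^-1%:C * ip u v) *: v) ^+ 2 =
  hnorm ip u ^+ 2 - normc (ip u v) ^+ 2 / hnorm ip v ^+ 2.
Proof.
move=> v0; rewrite -scaleNr hnorm_expand !normc_sqrE.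
set k := hnorm ip v ^+ 2; have k0 : k != 0 by rewrite expf_eq0.
by case: (ip u v) => x y /=; field.
Qed.

Lemma cauchy_schwarz u v : normc (ip u v) <= hnorm ip u * hnorm ip v.
Proof.
have [v0|v0] := eqVneq (hnorm ip v) 0.
  by rewrite (hnorm_eq0 v0) ip0r ComplexField.Normc.normc0 mulr_ge0 ?hnorm_ge0.
have := sqr_ge0 (hnorm ip (u - ((hnorm ip v ^+ 2)^-1%:C * ip u v) *: v)).
rewrite hnorm_sub_proj // subr_ge0 ler_pdivrMr ?exprn_gt0 ?lt0r ?v0 ?hnorm_ge0 //.
rewrite -exprMn ler_sqr ?nnegrE ?mulr_ge0 ?hnorm_ge0 ?normc_ge0 //.
Qed.

Lemma hnormD_le u v : hnorm ip (u + v) <= hnorm ip u + hnorm ip v.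
Proof.
rewrite -ler_sqr ?nnegrE ?addr_ge0 ?hnorm_ge0 // hnormD_sqr sqrrD.
have := le_trans (Re_le_normc (ip u v)) (cauchy_schwarz u v); lra.
Qed.

Lemma ip_eq0_of_nearest y n :
  (forall t, hnorm ip y <= hnorm ip (y - t *: n)) -> ip y n = 0.
Proof.
move=> nearest; have [n0|n0] := eqVneq (hnorm ip n) 0.
  by rewrite (hnorm_eq0 n0) ip0r.
have k0 : 0 < (hnorm ip n ^+ 2)^-1 by rewrite invr_gt0 exprn_gt0 // lt0r n0 hnorm_ge0.
have := nearest ((hnorm ip n ^+ 2)^-1%:C * ip y n).
rewrite -ler_sqr ?nnegrE ?hnorm_ge0 // hnorm_sub_proj // => le_proj.
have : normc (ip y n) ^+ 2 <= 0.
  by rewrite -(ler_pM2r k0) mul0r; lra.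
move=> sqr_le0; apply: ComplexField.Normc.eq0_normc; apply/eqP.
by rewrite -sqrf_eq0 eq_le sqr_le0 sqr_ge0.
Qed.
End InnerProduct.

Lemma inv_succ_lt (R : archiFieldType) (e : R) :
  0 < e -> exists N, forall k, (N <= k)%N -> k.+1%:R^-1 < e.
Proof.
move=> e0; exists (Num.bound e^-1) => k le_Nk.
rewrite invf_plt ?posrE ?ltr0Sn //; apply: lt_le_trans (archi_boundP _) _.
  by rewrite invr_ge0 ltW.
by rewrite ler_nat leqW.
Qed.

Section NearestPoint.
Variables (R : realType) (V : lmodType R[i]) (ip : V -> V -> R[i]).
Hypotheses (ipP : is_inner_product ip) (ip_complete : completeH ip).
Variable S : set V.
Hypothesis S_midpoint : forall x y, S x -> S y -> S (2^-1 *: (x + y)).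
Hypothesis S_closed :
  forall (u : nat -> V) p, (forall k, S (u k)) -> cvgH ip u p -> S p.
Variable z : V.

Lemma minimizing_cauchy (d : R) (x : nat -> V) :
  0 <= d -> (forall y, S y -> d <= hnorm ip (z - y)) ->
  (forall k, S (x k)) -> (forall k, hnorm ip (z - x k) < d + k.+1%:R^-1) ->
  cauchyH ip x.
Proof.
move=> d_ge0 d_le Sx x_lt eps eps0.
have [|N N_lt] := @inv_succ_lt _ (eps ^+ 2 / (16 * d + 8)).
  by rewrite divr_gt0 ?exprn_gt0 //; lra.
exists N => m n le_Nm le_Nn.
have close k : (N <= k)%N -> hnorm ip (z - x k) ^+ 2 < d ^+ 2 + eps ^+ 2 / 4.
  move=> /N_lt; have := x_lt k; set e := k.+1%:R^-1 => x_lt_k e_lt.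
  have e_gt0 : 0 < e by rewrite invr_gt0.
  have e_le1 : e <= 1 by rewrite invf_le1 ?ler1n ?ltr0Sn.
  rewrite ltr_pdivlMr in e_lt; last by lra.
  apply: (@lt_le_trans _ _ ((d + e) ^+ 2)).
    by rewrite ltr_sqr ?nnegrE ?hnorm_ge0 ?addr_ge0 ?(ltW e_gt0).
  rewrite sqrrD; nra.
pose mid := 2^-1 *: (x n + x m).
have mid_le : d <= hnorm ip (z - mid) := d_le _ (S_midpoint (Sx n) (Sx m)).
have half : (2^-1 + 2^-1 : R[i]) = 1 by rewrite [RHS](splitr 1) mul1r.
(* parallelogram law at the midpoint:
   ||x m - x n||^2 = 2 ||z - x m||^2 + 2 ||z - x n||^2 - 4 ||z - mid||^2 *)
have sum_mid : (z - x n) + (z - x m) = (z - mid) + (z - mid).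
  by rewrite addrACA [RHS]addrACA -!opprD /mid -scalerDl half scale1r.
have parallelogram := hnormB_sqr ipP (z - x n) (z - x m).
rewrite opprB addrC addrA subrK in parallelogram.
have := hnormD_sqr ipP (z - x n) (z - x m).
rewrite sum_mid (hnormD_sqr ipP) (ip_self ipP) => /= sum_sqr.
have le_mid : d ^+ 2 <= hnorm ip (z - mid) ^+ 2.
  by rewrite ler_sqr ?nnegrE ?hnorm_ge0.
rewrite -ltr_sqr ?nnegrE ?hnorm_ge0 ?ltW //.
have := close m le_Nm; have := close n le_Nn; lra.
Qed.

Lemma nearest_point_exists x0 : S x0 ->
  exists2 p, S p & forall y, S y -> hnorm ip (z - p) <= hnorm ip (z - y).
Proof.
move=> Sx0; pose D := [set hnorm ip (z - y) | y in S]%classic.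
have D_ge0 : lbound D 0 by move=> _ [y _ <-]; exact: hnorm_ge0.
have D_inf : has_inf D by split; [exists (hnorm ip (z - x0)), x0 | exists 0].
have d_le y : S y -> inf D <= hnorm ip (z - y).
  by move=> Sy; apply: (ge_inf D_inf.2); exists y.
have d_ge0 : 0 <= inf D by apply: lb_le_inf D_inf.1 D_ge0.
have x_ex k : exists y, S y /\ hnorm ip (z - y) < inf D + k.+1%:R^-1.
  have k_gt0 : 0 < k.+1%:R^-1 :> R by rewrite invr_gt0.
  by have [_ [y Sy <-] lt_y] := inf_adherent k_gt0 D_inf; exists y.
have [x x_min] := choice x_ex.
have [p x_p] := ip_complete (minimizing_cauchy d_ge0 d_le (fun k => (x_min k).1)
  (fun k => (x_min k).2)).
exists p; first exact: S_closed (fun k => (x_min k).1) x_p.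
move=> y Sy; apply: le_trans (d_le y Sy); apply/ler_addgt0Pr => e e_gt0.
have e2_gt0 : 0 < e / 2 by rewrite divr_gt0.
have [N1 N1_lt] := x_p _ e2_gt0; have [N2 N2_lt] := inv_succ_lt e2_gt0.
pose k := maxn N1 N2.
have := hnormD_le ipP (z - x k) (x k - p); rewrite addrA subrK.
have := (x_min k).2; have := N1_lt k (leq_maxl _ _); have := N2_lt k (leq_maxr _ _).
move: (k.+1%:R^-1) => r; lra.
Qed.
End NearestPoint.

Section Riesz.
Variables (R : realType) (V : lmodType R[i]) (ip : V -> V -> R[i]).
Hypotheses (ipP : is_inner_product ip) (ip_complete : completeH ip).
Variables (phi : V -> R[i]) (M : R).
Hypothesis phi_lin : forall a u v, phi (a *: u + v) = a * phi u + phi v.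
Hypothesis phi_bounded : forall x, normc (phi x) <= M * hnorm ip x.

Let phiD u v : phi (u + v) = phi u + phi v.
Proof. by have := phi_lin 1 u v; rewrite scale1r mul1r. Qed.

Let phi0 : phi 0 = 0.
Proof. by apply: (addrI (phi 0)); rewrite -phiD !addr0. Qed.

Let phiZ a u : phi (a *: u) = a * phi u.
Proof. by have := phi_lin a u 0; rewrite !addr0 phi0 addr0. Qed.

Let phiB u v : phi (u - v) = phi u - phi v.
Proof. by rewrite phiD -scaleN1r phiZ mulN1r. Qed.

Lemma functional_kernel_closed (u : nat -> V) p :
  (forall k, phi (u k) = 0) -> cvgH ip u p -> phi p = 0.
Proof.
move=> u0 u_p; apply: ComplexField.Normc.eq0_normc; apply/eqP.
rewrite eq_le normc_ge0 andbT; apply/ler_addgt0Pr => e e_gt0.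
have [N N_lt] := u_p (e / (`|M| + 1)) (divr_gt0 e_gt0 (ltr_pwDr ltr01 (normr_ge0 M))).
have := phi_bounded (u N - p); rewrite phiB u0 sub0r normcN.
have := N_lt N (leqnn N); rewrite ltr_pdivlMr ?ltr_pwDr ?normr_ge0 //.
have := ler_norm M; have := hnorm_ge0 ip (u N - p).
nra.
Qed.

Lemma functional_kernel_perp z : phi z != 0 ->
  exists2 y, phi y != 0 & forall n, phi n = 0 -> ip y n = 0.
Proof.
move=> phi_z; pose ker := [set n | phi n = 0]%classic.
have ker_mid x y : ker x -> ker y -> ker (2^-1 *: (x + y)).
  by rewrite /ker /= phiZ phiD => -> ->; rewrite addr0 mulr0.
have [p kerp p_min] := nearest_point_exists ipP ip_complete ker_mid
  functional_kernel_closed z phi0.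
exists (z - p); first by rewrite phiB kerp subr0.
move=> n n0; apply: (ip_eq0_of_nearest ipP) => t.
by rewrite -addrA -opprD; apply: p_min; rewrite /ker /= phiD phiZ kerp n0 mulr0 addr0.
Qed.

Lemma riesz_representation : exists h, forall x, phi x = ip x h.
Proof.
have [phi_eq0|/existsNP[z /eqP/functional_kernel_perp[y phi_y y_perp]]] :=
  pselect (forall x, phi x = 0).
  by exists 0 => x; rewrite (ip0r ipP).
have y0 : (hnorm ip y ^+ 2)%:C != 0.
  apply: contra phi_y => /eqP[] /eqP; rewrite expf_eq0 /= => /eqP/(hnorm_eq0 ipP) ->.
  by rewrite phi0.
exists (conjc (phi y / (hnorm ip y ^+ 2)%:C) *: y) => x.
have := y_perp (phi y *: x - phi x *: y).
rewrite phiB !phiZ mulrC subrr (ip_conj ipP) => /(_ erefl)/eqP.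
rewrite conjc_eq0 (ipBl ipP) !(ipZl ipP) (ip_self ipP y) subr_eq0 => /eqP phi_x.
by rewrite (ipZr ipP) conjcK mulrAC phi_x mulfK.
Qed.
End Riesz.

Section Adjoint.
Variables (R : realType) (V : lmodType R[i]) (ip : V -> V -> R[i]).
Hypothesis ipP : is_inner_product ip.
Implicit Types A As B Bs : V -> V.

Lemma adjoint_exists A :
  completeH ip -> bounded_op ip A -> exists As, is_adjoint ip A As.
Proof.
move=> ip_complete [A_lin [M A_bnd]].
have rep f : exists h, forall x, ip (A x) f = ip x h.
  apply: (riesz_representation ipP ip_complete (M := M * hnorm ip f)) => [a u v|x].
    by rewrite A_lin (ip_linl ipP).
  apply: le_trans (cauchy_schwarz ipP _ _) _.
  by rewrite mulrAC ler_wpM2r ?hnorm_ge0.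
by have [As As_adj] := choice rep; exists As.
Qed.

Lemma adjoint_ipr A As : is_adjoint ip A As -> forall f g, ip f (A g) = ip (As f) g.
Proof. by move=> adj f g; rewrite (ip_conj ipP) adj -(ip_conj ipP). Qed.

Lemma adjoint_linear A As : is_adjoint ip A As ->
  forall a u v, As (a *: u + v) = a *: As u + As v.
Proof.
move=> adj a u v; apply: (ipr_ext ipP) => x.
by rewrite -adj !(ipDr ipP) !(ipZr ipP) -!adj.
Qed.

Lemma adjoint_unique A As Bs : is_adjoint ip A As -> is_adjoint ip A Bs -> As =1 Bs.
Proof. by move=> adjA adjB f; apply: (ipr_ext ipP) => x; rewrite -adjA adjB. Qed.

Lemma adjoint_comp A As B Bs : is_adjoint ip A As -> is_adjoint ip B Bs ->
  is_adjoint ip (fun f => A (B f)) (fun g => Bs (As g)).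
Proof. by move=> adjA adjB f g; rewrite adjA adjB. Qed.

Lemma bounded_op_comp A B : bounded_op ip A -> bounded_op ip B ->
  exists M, forall f, hnorm ip (A (B f)) <= M * hnorm ip f.
Proof.
move=> [_ [MA A_bnd]] [_ [MB B_bnd]]; exists (`|MA| * `|MB|) => f.
have le_norm M x : M * hnorm ip x <= `|M| * hnorm ip x.
  by rewrite ler_wpM2r ?hnorm_ge0 ?ler_norm.
apply: le_trans (A_bnd _) _; apply: le_trans (le_norm _ _) _.
by rewrite -mulrA ler_wpM2l //; apply: le_trans (B_bnd _) (le_norm _ _).
Qed.
End Adjoint.

Section ParsevalFrame.
Variables (R : realType) (V : lmodType R[i]) (ip : V -> V -> R[i]).
Hypothesis ipP : is_inner_product ip.
Variables (d : measure_display) (T : measurableType d).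
Variables (mu : {measure set T -> \bar R}) (Ks : V -> V) (F : T -> V).
Hypothesis F_frame : parseval_cont_Kframe ip mu Ks F.

Lemma frame_sqr_integrable x :
  mu.-integrable setT (fun w => (normc (ip x (F w)) ^+ 2)%:E).
Proof.
apply/integrableP; split.
  apply/measurable_EFinP; under eq_fun do rewrite normc_sqrE.
  by have [mRe mIm] := F_frame.1 x; apply: measurable_funD; exact: measurable_funX.
have -> : (fun w => `|(normc (ip x (F w)) ^+ 2)%:E|%E) =
          (fun w => (normc (ip x (F w)) ^+ 2)%:E).
  by apply: funext => w; rewrite gee0_abs // lee_fin sqr_ge0.
by rewrite F_frame.2 ltry.
Qed.

Lemma frame_sqr_sub_integrable u v : mu.-integrable setT
  (fun w => (normc (ip u (F w)) ^+ 2 - normc (ip v (F w)) ^+ 2)%:E).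
Proof.
have := integrableB measurableT (frame_sqr_integrable u) (frame_sqr_integrable v).
by apply: eq_integrable => // w _; rewrite /= EFinB.
Qed.

Lemma frame_sqr_sub_Rintegral u v :
  Rintegral mu setT (fun w => normc (ip u (F w)) ^+ 2 - normc (ip v (F w)) ^+ 2)
  = hnorm ip (Ks u) ^+ 2 - hnorm ip (Ks v) ^+ 2.
Proof.
rewrite RintegralB //; first by rewrite /Rintegral !F_frame.2.
- exact: frame_sqr_integrable.
- exact: frame_sqr_integrable.
Qed.

Hypothesis Ks_lin : forall a u v, Ks (a *: u + v) = a *: Ks u + Ks v.

Let KsD u v : Ks (u + v) = Ks u + Ks v.
Proof. by have := Ks_lin 1 u v; rewrite !scale1r. Qed.

Let KsZ a u : Ks (a *: u) = a *: Ks u.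
Proof.
have Ks0 : Ks 0 = 0 by apply: (addrI (Ks 0)); rewrite -KsD !addr0.
by have := Ks_lin a u 0; rewrite !addr0 Ks0 addr0.
Qed.

Let KsB u v : Ks (u - v) = Ks u - Ks v.
Proof. by rewrite KsD -scaleN1r KsZ scaleN1r. Qed.

Lemma frame_cross_Cintegrable u v :
  Cintegrable mu (fun w => ip u (F w) * conjc (ip v (F w))).
Proof.
split.
  have := integrableZl measurableT 4^-1 (frame_sqr_sub_integrable (u + v) (u - v)).
  apply: eq_integrable => // w _.
  by rewrite /= Re_mulJ_polar (ipDl ipP) (ipBl ipP) EFinM.
have := integrableZl measurableT 4^-1
  (frame_sqr_sub_integrable (u + 'i *: v) (u - 'i *: v)).
apply: eq_integrable => // w _.
by rewrite /= Im_mulJ_polar (ipDl ipP) (ipBl ipP) (ipZl ipP) EFinM.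
Qed.

Lemma frame_cross_Re_Rintegral u v :
  Rintegral mu setT (fun w => complex.Re (ip u (F w) * conjc (ip v (F w)))) =
  complex.Re (ip (Ks u) (Ks v)).
Proof.
rewrite (Re_ip_polar ipP) -KsD -KsB -frame_sqr_sub_Rintegral -RintegralZl //.
  by apply: eq_Rintegral => w _; rewrite Re_mulJ_polar (ipDl ipP) (ipBl ipP).
exact: frame_sqr_sub_integrable.
Qed.

Lemma frame_cross_Im_Rintegral u v :
  Rintegral mu setT (fun w => complex.Im (ip u (F w) * conjc (ip v (F w)))) =
  complex.Im (ip (Ks u) (Ks v)).
Proof.
rewrite (Im_ip_polar ipP) -!KsZ -KsD -KsB -frame_sqr_sub_Rintegral -RintegralZl //.
  apply: eq_Rintegral => w _.
  by rewrite Im_mulJ_polar (ipDl ipP) (ipBl ipP) (ipZl ipP).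
exact: frame_sqr_sub_integrable.
Qed.

Lemma frame_cross_Cintegral u v :
  Cintegral mu (fun w => ip u (F w) * conjc (ip v (F w))) = ip (Ks u) (Ks v).
Proof.
rewrite /Cintegral frame_cross_Re_Rintegral frame_cross_Im_Rintegral.
by case: (ip (Ks u) (Ks v)).
Qed.

Lemma frame_adjoint_cont_Bessel (A As : V -> V) (M : R) : is_adjoint ip A As ->
  (forall f, hnorm ip (Ks (As f)) <= M * hnorm ip f) ->
  cont_Bessel ip mu (fun w => A (F w)).
Proof.
move=> adj bnd; split.
  by move=> f; under eq_fun do rewrite (adjoint_ipr ipP adj); exact: F_frame.1.
exists (M ^+ 2 + 1); split; first by rewrite ltr_pwDr ?sqr_ge0.
move=> f; under eq_fun do rewrite (adjoint_ipr ipP adj).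
rewrite F_frame.2 lee_fin.
have := bnd f; have := hnorm_ge0 ip (Ks (As f)); have := hnorm_ge0 ip f; nra.
Qed.

Lemma frame_adjoint_Cintegral (A As : V -> V) f g : is_adjoint ip A As ->
  Cintegrable mu (fun w => ip f (A (F w)) * ip (F w) g) /\
  Cintegral mu (fun w => ip f (A (F w)) * ip (F w) g) = ip (Ks (As f)) (Ks g).
Proof.
move=> adj; have -> : (fun w => ip f (A (F w)) * ip (F w) g) =
    (fun w => ip (As f) (F w) * conjc (ip g (F w))).
  by apply: funext => w; rewrite (adjoint_ipr ipP adj) (ip_conj ipP g (F w)).
by split; [exact: frame_cross_Cintegrable | exact: frame_cross_Cintegral].
Qed.
End ParsevalFrame.

Theorem lemma3p2 (R : realType) (V : lmodType R[i]) (ip : V -> V -> R[i])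
  (d : measure_display) (T : measurableType d) (mu : {measure set T -> \bar R})
  (K Ks Kd : V -> V) (F : T -> V) :
  separable_hilbert ip ->
  bounded_op ip K ->
  is_adjoint ip K Ks ->
  closed_range ip K ->
  is_pseudo_inverse ip K Kd ->
  parseval_cont_Kframe ip mu Ks F ->
  dual_cont_KBessel ip mu K F (fun w => Kd (F w)).
Proof.
(* separability and closed range only serve to make K^† exist, which is assumed *)
move=> [ipP ip_complete _] K_bnd K_adj _ [Kd_bnd KKdK _ _ KdK_sa] F_frame.
have [Kds Kd_adj] := adjoint_exists ipP ip_complete Kd_bnd.
have KsKds : forall f, Ks (Kds f) = Kd (K f) :=
  adjoint_unique ipP (adjoint_comp Kd_adj K_adj) KdK_sa.
have [M KdK_bnd] := bounded_op_comp Kd_bnd K_bnd.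
split.
  by apply: (frame_adjoint_cont_Bessel ipP F_frame Kd_adj) => f; rewrite KsKds.
move=> f g.
have [G_int G_eq] := frame_adjoint_Cintegral ipP F_frame (adjoint_linear ipP K_adj) f g Kd_adj.
by split; rewrite // G_eq KsKds -K_adj KKdK.
Qed.
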